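(* For every strongly connected component $C$ of $G$, the set $\Delta_C$ is connected.
   Context: $G$ is a finite directed graph (loops allowed) with vertex set $V$. $\Omega$ is the set of bi-infinite paths in $G$, i.e. sequences $(x_i)_{i\in\mathbb Z}\in V^{\mathbb Z}$ such that for every $i$ there is an edge from $x_i$ to $x_{i+1}$. Fix $h>0$. $\bar\Delta$ is the set of functions $x:\mathbb R\to V$ that are constant on each interval $[nh,(n+1)h)$, $n\in\mathbb Z$, and satisfy $(x(ih))_{i\in\mathbb Z}\in\Omega$. $\Delta=\{x(\cdot+t): x\in\bar\Delta,\ t\in\mathbb R\}$, with metric $d(x,y)=\sum_{i\in\mathbb Z}4^{-|i|}\frac1h\int_{ih}^{(i+1)h}\delta(x,y,t)\,dt$, where $\delta(x,y,t)=1$ if $x(t)\ne y(t)$ and $0$ otherwise. A strongly connected component of $G$ is a maximal nonempty set $C\subseteq V$ such that for all $u,v\in C$ (including $u=v$) there is a directed path of positive length from $u$ to $v$ with all vertices in $C$. The lift of $C$ is $\Delta_C=\{f\in\Delta: f(t)\in C \text{ for all } t\in\mathbb R\}$. *)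

From HB Require Import structures.
From mathcomp Require Import all_boot.
From Stdlib Require Import Reals ZArith ClassicalEpsilon.

Set Implicit Arguments.
Unset Strict Implicit.
Unset Printing Implicit Defensive.

Local Open Scope R_scope.

(* Riemann integral of f on [a,b] (0 if f is not Riemann integrable there;
   the functions integrated below are step functions, hence integrable). *)
Definition RInt (f : R -> R) (a b : R) : R :=
  match excluded_middle_informative (inhabited (Riemann_integrable f a b)) with
  | left H => RiemannInt (epsilon H (fun _ => True))
  | right _ => 0
  end.

Definition series (u : nat -> R) : R :=
  epsilon (inhabits 0) (fun l => infinite_sum u l).

(* Sum over Z, as the limit of the symmetric partial sums over [-n,n]. *)
Definition Zsum (f : Z -> R) : R :=
  series (fun k => match k with
                   | O => f 0%Z
                   | S _ => f (Z.of_nat k) + f (- Z.of_nat k)%Z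
                   end).

Section Graph.
Variables (V : finType) (E : rel V).

Definition pos_path_in (C : {set V}) (u v : V) : Prop :=
  exists s : seq V, s <> [::] /\ path E u s /\ last u s = v /\
                    u \in C /\ all (fun w => w \in C) s.

Definition strongly_connected_set (C : {set V}) : Prop :=
  C != set0 /\ forall u v, u \in C -> v \in C -> pos_path_in C u v.

Definition is_SCC (C : {set V}) : Prop :=
  strongly_connected_set C /\
  forall D : {set V}, strongly_connected_set D -> C \subset D -> D = C.

Definition in_Omega (x : Z -> V) : Prop := forall i : Z, E (x i) (x (i + 1)%Z).

Variable h : R.

Definition in_Delta_bar (x : R -> V) : Prop :=
  (forall (n : Z) (t : R), IZR n * h <= t < IZR (n + 1) * h -> x t = x (IZR n * h)) /\
  in_Omega (fun i => x (IZR i * h)).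

Definition in_Delta (f : R -> V) : Prop :=
  exists (x : R -> V) (t : R), in_Delta_bar x /\ forall s, f s = x (s + t).

Definition delta (x y : R -> V) (t : R) : R := if x t == y t then 0 else 1.

Definition dDelta (x y : R -> V) : R :=
  Zsum (fun i => (/ 4) ^ (Z.abs_nat i) *
                 (/ h * RInt (delta x y) (IZR i * h) (IZR (i + 1) * h))).

Definition Delta_C (C : {set V}) (f : R -> V) : Prop :=
  in_Delta f /\ forall t, f t \in C.

End Graph.

Definition rel_open {X : Type} (d : X -> X -> R) (A P : X -> Prop) : Prop :=
  forall x, A x -> P x -> exists eps, eps > 0 /\
     forall y, A y -> d x y < eps -> P y.

Definition connected_in {X : Type} (d : X -> X -> R) (A : X -> Prop) : Prop :=
  forall P : X -> Prop,
    rel_open d A P -> rel_open d A (fun x => ~ P x) ->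
    (forall x, A x -> P x) \/ (forall x, A x -> ~ P x).

(* Every element of Delta_C is a step function u |-> xs (floor ((u + t) / h)) of a
   bi-infinite path xs in C.  Shifting such a function in time by s moves it by at most
   8 s / h, so along a time orbit a relatively clopen set P of Delta_C cuts out a clopen
   subset of R, which is trivial.  Given f in P and g outside P, strong connectivity of C
   yields a path z in C that follows the path of f on a window of N cells, walks inside C
   to the path of g and then follows it on a window of N cells; suitable time shifts of
   the step function of z are within 4 / 2^N of f and of g.  For N large the first shift
   lies in P, hence so does the second, although it is close to g. *)

From HB Require Import structures.
From mathcomp Require Import all_boot.
From Stdlib Require Import Reals ZArith Lra Lia ClassicalEpsilon Classical FunctionalExtensionality.
Set Implicit Arguments.
Unset Strict Implicit.
Local Open Scope R_scope.

Lemma series_le (u : nat -> R) (M : R) :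
  (forall k, 0 <= u k) -> (forall n, sum_f_R0 u n <= M) -> series u <= M.
Proof.
move=> u_ge0 sum_le.
have sum_incr : Un_growing (sum_f_R0 u) by move=> n /=; have := u_ge0 n.+1; lra.
have [l cvg_l] : {l | Un_cv (sum_f_R0 u) l}.
  by apply: growing_cv => //; exists M => _ [n ->].
have cvg_series : infinite_sum u (series u).
  by apply: (epsilon_spec (inhabits 0) (fun l => infinite_sum u l)); exists l.
have cvg_M : Un_cv (fun _ => M) M.
  by move=> e e_gt0; exists 0%nat => n _; rewrite /Rdist Rminus_diag Rabs_R0.
exact: Rle_cv_lim sum_le cvg_series cvg_M.
Qed.

Lemma quarter_pow_le (N k : nat) : (N <= k)%coq_nat -> (/4) ^ k <= (/2) ^ N * (/2) ^ k.
Proof.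
move=> le_Nk; have -> : /4 = /2 * /2 by field.
rewrite Rpow_mult_distr; apply: Rmult_le_compat_r; first by apply: pow_le; lra.
rewrite -(Nat.sub_add N k le_Nk) pow_add.
have ? : 0 < (/2) ^ N by apply: pow_lt; lra.
have ? : (/2) ^ (k - N)%coq_nat <= 1 by rewrite -(pow1 (k - N)%coq_nat); apply: pow_incr; lra.
nra.
Qed.

Lemma Zsum_le (F : Z -> R) (c : R) (N : nat) : 0 <= c ->
  (forall i, 0 <= F i <= c * (/4) ^ Z.abs_nat i) ->
  (forall i, (Z.abs_nat i < N)%coq_nat -> F i = 0) ->
  Zsum F <= 4 * c * (/2) ^ N.
Proof.
move=> c_ge0 F_bnd F_eq0.
have abs_pos k : Z.abs_nat (Z.of_nat k) = k by lia.
have abs_neg k : Z.abs_nat (- Z.of_nat k) = k by lia.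
have F_le i k : Z.abs_nat i = k -> F i <= c * (/2) ^ N * (/2) ^ k.
  move=> <-; have [lt_iN|le_Ni] := Nat.lt_ge_cases (Z.abs_nat i) N.
  - rewrite F_eq0 //; have ? : 0 < (/2) ^ N by apply: pow_lt; lra.
    have ? : 0 < (/2) ^ Z.abs_nat i by apply: pow_lt; lra.
    apply: Rmult_le_pos => //; nra.
  - have := quarter_pow_le le_Ni; have := F_bnd i; nra.
apply: series_le => [[|k]|n]; first exact: (proj1 (F_bnd 0%Z)).
  by have := F_bnd (Z.of_nat k.+1); have := F_bnd (- Z.of_nat k.+1)%Z; lra.
apply: Rle_trans (_ : sum_f_R0 (fun k => (/2) ^ k * (2 * c * (/2) ^ N)) n <= _).
  apply: sum_Rle => -[|k] _ /=.
    have ? : 0 <= c * (/2) ^ N by apply: Rmult_le_pos => //; apply: pow_le; lra.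
    by have := F_le 0%Z 0%nat erefl; simpl; lra.
  by have := F_le _ _ (abs_pos k.+1); have := F_le _ _ (abs_neg k.+1); simpl; lra.
rewrite -scal_sum tech3; last lra.
have ? : 0 < (/2) ^ n.+1 by apply: pow_lt; lra.
have ? : 0 <= 2 * c * (/2) ^ N by apply: Rmult_le_pos; [lra | apply: pow_le; lra].
have -> : (1 - (/2) ^ n.+1) / (1 - /2) = 2 - 2 * (/2) ^ n.+1 by field.
nra.
Qed.

Lemma RInt_ind (P : R -> Prop) (f : R -> R) (a b : R) :
  P 0 -> (forall pr : Riemann_integrable f a b, P (RiemannInt pr)) -> P (RInt f a b).
Proof. by rewrite /RInt; case: excluded_middle_informative. Qed.

Lemma RiemannInt_eq0 (f : R -> R) (a b : R) (pr : Riemann_integrable f a b) :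
  a <= b -> (forall u, a < u < b -> f u = 0) -> RiemannInt pr = 0.
Proof.
move=> le_ab f_eq0; rewrite (RiemannInt_P18 pr (RiemannInt_P14 a b 0) le_ab) //.
by rewrite RiemannInt_P15; ring.
Qed.

Lemma RiemannInt_bounds01 (f : R -> R) (a b : R) (pr : Riemann_integrable f a b) :
  a <= b -> (forall u, a < u < b -> 0 <= f u <= 1) -> 0 <= RiemannInt pr <= b - a.
Proof.
move=> le_ab f01; split.
  rewrite -(Rmult_0_l (b - a)) -(RiemannInt_P15 (RiemannInt_P14 a b 0)).
  by apply: RiemannInt_P19 => // u /f01 [].
rewrite -[X in _ <= X]Rmult_1_l -(RiemannInt_P15 (RiemannInt_P14 a b 1)).
by apply: RiemannInt_P19 => // u /f01 [].
Qed.

Lemma RiemannInt_le_tail (f : R -> R) (a b s : R) (pr : Riemann_integrable f a b) :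
  a <= b -> 0 <= s -> (forall u, a < u < b -> 0 <= f u <= 1) ->
  (forall u, a < u < b - s -> f u = 0) -> RiemannInt pr <= s.
Proof.
move=> le_ab s_ge0 f01 f_eq0; set c := Rmax a (b - s).
have le_acb : a <= c <= b by split; [apply: Rmax_l | apply: Rmax_lub; lra].
have le_bs_c : b - s <= c by apply: Rmax_r.
have int_ac : RiemannInt (RiemannInt_P22 pr le_acb) = 0.
  apply: RiemannInt_eq0 (proj1 le_acb) _ => u [lt_au lt_uc]; apply: f_eq0; split=> //.
  by move: lt_uc; rewrite /c /Rmax; case: Rle_dec; lra.
rewrite -(RiemannInt_P26 (RiemannInt_P22 pr le_acb) (RiemannInt_P23 pr le_acb)) int_ac.
have [_] := RiemannInt_bounds01 (RiemannInt_P23 pr le_acb) (proj2 le_acb)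
  (fun u Hu => f01 u (conj (Rle_lt_trans _ _ _ (proj1 le_acb) (proj1 Hu)) (proj2 Hu))).
lra.
Qed.

Lemma RInt_bounds01 (f : R -> R) (a b : R) :
  a <= b -> (forall u, a < u < b -> 0 <= f u <= 1) -> 0 <= RInt f a b <= b - a.
Proof.
move=> le_ab f01; apply: (RInt_ind (P := fun I => 0 <= I <= b - a)) => [|pr].
  lra.
exact: RiemannInt_bounds01.
Qed.

Lemma RInt_eq0 (f : R -> R) (a b : R) :
  a <= b -> (forall u, a < u < b -> f u = 0) -> RInt f a b = 0.
Proof.
move=> le_ab f_eq0; apply: (RInt_ind (P := fun I => I = 0)) => // pr.
exact: RiemannInt_eq0.
Qed.

Lemma RInt_le_two_tails (f : R -> R) (a p b s : R) :
  a <= p <= b -> 0 <= s -> (forall u, a < u < b -> 0 <= f u <= 1) ->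
  (forall u, a < u < p - s -> f u = 0) -> (forall u, p < u < b - s -> f u = 0) ->
  RInt f a b <= 2 * s.
Proof.
move=> le_apb s_ge0 f01 f_eq0_l f_eq0_r.
apply: (RInt_ind (P := fun I => I <= 2 * s)) => [|pr]; first lra.
rewrite -(RiemannInt_P26 (RiemannInt_P22 pr le_apb) (RiemannInt_P23 pr le_apb)).
have := RiemannInt_le_tail (RiemannInt_P22 pr le_apb) (proj1 le_apb) s_ge0
  (fun u Hu => f01 u (conj (proj1 Hu) (Rlt_le_trans _ _ _ (proj2 Hu) (proj2 le_apb))))
  (fun u Hu => f_eq0_l u (conj (proj1 Hu) (proj2 Hu))).
have := RiemannInt_le_tail (RiemannInt_P23 pr le_apb) (proj2 le_apb) s_ge0
  (fun u Hu => f01 u (conj (Rle_lt_trans _ _ _ (proj1 le_apb) (proj1 Hu)) (proj2 Hu)))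
  (fun u Hu => f_eq0_r u Hu).
lra.
Qed.

Section Cells.
Variable h : R.
Hypothesis hpos : 0 < h.

Definition cell (w : R) : Z := Int_part (w / h).

Lemma cell_spec (w : R) : IZR (cell w) * h <= w < IZR (cell w + 1) * h.
Proof.
have [lb ub] := base_Int_part (w / h).
have w_eq : w / h * h = w by field; lra.
rewrite plus_IZR /cell; split; nra.
Qed.

Lemma cell_unique (n : Z) (w : R) : IZR n * h <= w < IZR (n + 1) * h -> cell w = n.
Proof.
rewrite plus_IZR => -[lb ub]; symmetry; apply: Int_part_spec; split.
- apply: (Rmult_lt_reg_r h) => //; have -> : (w / h - 1) * h = w - h by field; lra.
  lra.
- apply: (Rmult_le_reg_r h) => //; have -> : w / h * h = w by field; lra.
  lra.
Qed.

Lemma cell_IZR (n : Z) : cell (IZR n * h) = n.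
Proof. by apply: cell_unique; rewrite plus_IZR; lra. Qed.

Lemma cell_le (w1 w2 : R) : w1 <= w2 -> (cell w1 <= cell w2)%Z.
Proof.
move=> le_w; have [lb1 _] := cell_spec w1; have [_ ub2] := cell_spec w2.
suff : (cell w1 < cell w2 + 1)%Z by lia.
by apply: lt_IZR; apply: (Rmult_lt_reg_r h) => //; lra.
Qed.

Lemma cell_addZ (w : R) (m : Z) : cell (w + IZR m * h) = (cell w + m)%Z.
Proof.
apply: cell_unique; have := cell_spec w; move: (cell w) => k [lb ub].
rewrite !plus_IZR !Rmult_plus_distr_r in ub *; lra.
Qed.

Lemma cell_length (i : Z) : IZR (i + 1) * h - IZR i * h = h.
Proof. by rewrite plus_IZR; ring. Qed.

End Cells.

Section ClopenReal.
Variable Q : R -> Prop.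
Hypotheses (Q_open : open_set Q) (nQ_open : open_set (fun r => ~ Q r)).

Lemma clopen_constant_le (a b : R) : a <= b -> Q a -> Q b.
Proof.
move=> le_ab Qa.
pose S r := a <= r <= b /\ forall r', a <= r' <= r -> Q r'.
have Sa : S a by split=> [|r' ?]; [lra | have -> : r' = a by lra].
have S_bounded : bound S by exists b => r [? _]; lra.
have [sg [sg_ub sg_lub]] := completeness S S_bounded (ex_intro _ a Sa).
have le_a_sg : a <= sg := sg_ub a Sa.
have le_sg_b : sg <= b by apply: sg_lub => r [? _]; lra.
have Q_below r : a <= r < sg -> Q r.
  move=> [le_ar lt_r_sg]; apply: NNPP => nQr.
  suff : sg <= r by lra.
  apply: sg_lub => r1 [_ Q_r1]; case: (Rle_or_lt r1 r) => // lt_r_r1.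
  by case: nQr; apply: Q_r1; lra.
have Qsg : Q sg.
  apply: NNPP => nQsg; have [[e e_gt0] ball_e] := nQ_open nQsg.
  have [eq_sg|lt_a_sg] : sg = a \/ a < sg by lra.
    by apply: nQsg; rewrite eq_sg.
  have lt_r_sg : Rmax a (sg - e / 2) < sg by apply: Rmax_lub_lt; lra.
  apply: (ball_e (Rmax a (sg - e / 2))); last by apply: Q_below; split=> //; apply: Rmax_l.
  by have := Rmax_r a (sg - e / 2); rewrite /disc Rabs_left /=; lra.
have [<- //|lt_sg_b] : sg = b \/ sg < b by lra.
have [[e e_gt0] ball_e] := Q_open Qsg.
have lt_sg_r : sg < Rmin b (sg + e / 2) by apply: Rmin_glb_lt; lra.
suff /sg_ub : S (Rmin b (sg + e / 2)) by lra.
split=> [|r' [le_ar' le_r']]; first by have := Rmin_l b (sg + e / 2); lra.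
have [lt_r'_sg|le_sg_r'] := Rlt_or_le r' sg; first exact: Q_below.
apply: (ball_e r'); have := Rmin_r b (sg + e / 2).
by rewrite /disc Rabs_right /=; lra.
Qed.

End ClopenReal.

Lemma clopen_constant (Q : R -> Prop) (a b : R) :
  open_set Q -> open_set (fun r => ~ Q r) -> Q a -> Q b.
Proof.
move=> Q_open nQ_open Qa; have [le_ab|lt_ba] := Rle_or_lt a b.
  exact: (clopen_constant_le Q_open nQ_open le_ab).
have nnQ_open : open_set (fun r => ~ ~ Q r).
  move=> r /NNPP /Q_open [e ball_e]; exists e => s /ball_e Qs nQs; exact: nQs Qs.
by apply: NNPP => nQb; apply: (clopen_constant_le nQ_open nnQ_open (Rlt_le _ _ lt_ba) nQb).
Qed.

Lemma pow_half_lt (e : R) : 0 < e -> exists N : nat, 4 * (/2) ^ N < e.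
Proof.
move=> e_gt0; have abs_half : Rabs (/2) < 1 by rewrite Rabs_right; lra.
have [N small] := pow_lt_1_zero (/2) abs_half (e / 4) ltac:(lra).
exists N; have := small N (le_n N); rewrite Rabs_right; first lra.
by apply: Rle_ge; apply: pow_le; lra.
Qed.

Section Splice.
Variables (V : finType) (E : rel V).

Definition splice (xs : Z -> V) (s : seq V) (ys : Z -> V) (i : Z) : V :=
  if (i <=? 0)%Z then xs i
  else if (i <=? Z.of_nat (size s))%Z then nth (xs 0%Z) (xs 0%Z :: s) (Z.to_nat i)
  else ys (i - Z.of_nat (size s))%Z.

Section SpliceFacts.
Variables (xs ys : Z -> V) (s : seq V).
Hypothesis s_last : last (xs 0%Z) s = ys 0%Z.

Lemma splice_left (i : Z) : (i <= 0)%Z -> splice xs s ys i = xs i.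
Proof. by rewrite /splice => /Z.leb_spec0 ->. Qed.

Lemma splice_mid (i : Z) : (0 <= i <= Z.of_nat (size s))%Z ->
  splice xs s ys i = nth (xs 0%Z) (xs 0%Z :: s) (Z.to_nat i).
Proof.
move=> i_mid; rewrite /splice; case: Z.leb_spec0 => [le_i0|_].
  by have -> : i = 0%Z by lia.
by case: Z.leb_spec0 => //; lia.
Qed.

Lemma splice_right (i : Z) : (0 <= i)%Z -> splice xs s ys (i + Z.of_nat (size s)) = ys i.
Proof.
move=> le_0i; have [->|lt_0i] : i = 0%Z \/ (0 < i)%Z by lia.
  by rewrite splice_mid /= ?Nat2Z.id -?s_last ?nth_last //; lia.
rewrite /splice; case: Z.leb_spec0 => [|_]; first lia.
by case: Z.leb_spec0 => [|_]; [lia | rewrite Z.add_simpl_r].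
Qed.

Lemma splice_in_Omega : in_Omega E xs -> in_Omega E ys -> path E (xs 0%Z) s ->
  in_Omega E (splice xs s ys).
Proof.
move=> xs_path ys_path s_path i.
have [lt_i0|[i_mid|le_ni]] :
    (i < 0)%Z \/ (0 <= i < Z.of_nat (size s))%Z \/ (Z.of_nat (size s) <= i)%Z by lia.
- by rewrite !splice_left; try lia; apply: xs_path.
- rewrite (splice_mid (i := i)) ?(splice_mid (i := i + 1)); try lia.
  rewrite Z2Nat.inj_add ?Nat.add_1_r; try lia.
  by apply: (elimT (pathP (xs 0%Z)) s_path); apply/ltP; lia.
- have -> : i = (i - Z.of_nat (size s) + Z.of_nat (size s))%Z by ring.
  rewrite (_ : (_ + _ + 1 = i - Z.of_nat (size s) + 1 + Z.of_nat (size s))%Z); last ring.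
  by rewrite !splice_right; try lia; apply: ys_path.
Qed.

Lemma splice_in (C : {set V}) : (forall i, xs i \in C) -> (forall i, ys i \in C) ->
  all (fun w => w \in C) s -> forall i, splice xs s ys i \in C.
Proof.
move=> xs_C ys_C s_C i.
have [le_i0|[i_mid|le_ni]] :
    (i <= 0)%Z \/ (0 <= i <= Z.of_nat (size s))%Z \/ (Z.of_nat (size s) <= i)%Z by lia.
- by rewrite splice_left.
- rewrite splice_mid //; apply: (allP (_ : all (fun w => w \in C) (xs 0%Z :: s))).
    by rewrite /= xs_C.
  by apply: mem_nth; apply/ltP => /=; lia.
- have -> : i = (i - Z.of_nat (size s) + Z.of_nat (size s))%Z by ring.
  by rewrite splice_right //; lia.
Qed.

End SpliceFacts.

Lemma in_Omega_shift (xs : Z -> V) (K : Z) : in_Omega E xs -> in_Omega E (fun i => xs (i + K)%Z).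
Proof. by move=> xs_path i; rewrite (_ : (i + 1 + K = i + K + 1)%Z); [apply: xs_path | ring]. Qed.

Lemma strongly_connected_splice (C : {set V}) (xs ys : Z -> V) :
  strongly_connected_set E C -> in_Omega E xs -> in_Omega E ys ->
  (forall i, xs i \in C) -> (forall i, ys i \in C) ->
  exists (z : Z -> V) (n : Z), in_Omega E z /\ (forall i, z i \in C) /\
    (forall i, (i <= 0)%Z -> z i = xs i) /\ (forall i, (0 <= i)%Z -> z (i + n)%Z = ys i).
Proof.
move=> [_ C_conn] xs_path ys_path xs_C ys_C.
have [s [_ [s_path [s_last [_ s_C]]]]] := C_conn _ _ (xs_C 0%Z) (ys_C 0%Z).
exists (splice xs s ys), (Z.of_nat (size s)); split; first exact: splice_in_Omega.
split; first exact: splice_in.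
by split=> i; [exact: splice_left | exact: splice_right].
Qed.

End Splice.

Section StepFunctions.
Variables (V : finType) (E : rel V) (h : R).
Hypothesis hpos : 0 < h.

Definition stepfun (xs : Z -> V) (t u : R) : V := xs (cell h (u + t)).

Lemma Delta_C_stepfunP (C : {set V}) (f : R -> V) :
  Delta_C E h C f <->
  exists xs t, in_Omega E xs /\ (forall i, xs i \in C) /\ f = stepfun xs t.
Proof.
split.
  move=> [[x [t [[x_const x_path] f_eq]]] f_C].
  exists (fun i => x (IZR i * h)), t; split=> //; split.
    move=> i; have -> : IZR i * h = IZR i * h - t + t by ring.
    by rewrite -f_eq; apply: f_C.
  apply: functional_extensionality => u; rewrite f_eq /stepfun.
  exact: x_const (cell_spec hpos (u + t)).
move=> [xs [t [xs_path [xs_C ->]]]]; split=> [|u]; last exact: xs_C.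
exists (fun w => xs (cell h w)), t; split=> //; split.
  by move=> n w /(cell_unique hpos) ->; rewrite cell_IZR.
by move=> i; rewrite !cell_IZR.
Qed.

Lemma delta_bounds01 (x y : R -> V) (u : R) : 0 <= delta x y u <= 1.
Proof. by rewrite /delta; case: eqP; lra. Qed.

Lemma dDelta_sym (x y : R -> V) : dDelta h x y = dDelta h y x.
Proof.
rewrite /dDelta (_ : delta x y = delta y x) //.
by apply: functional_extensionality => u; rewrite /delta eq_sym.
Qed.

Lemma dDelta_le (f g : R -> V) (c : R) (N : nat) : 0 <= c ->
  (forall i, RInt (delta f g) (IZR i * h) (IZR (i + 1) * h) <= c * h) ->
  (forall i u, (Z.abs_nat i < N)%coq_nat -> IZR i * h < u < IZR (i + 1) * h -> f u = g u) ->
  dDelta h f g <= 4 * c * (/2) ^ N.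
Proof.
move=> c_ge0 int_le agree; apply: Zsum_le => // i.
  have ? : 0 <= (/4) ^ Z.abs_nat i by apply: pow_le; lra.
  have le_cell : IZR i * h <= IZR (i + 1) * h by have := cell_length h i; lra.
  have [int_ge0 _] := RInt_bounds01 le_cell (fun u _ => delta_bounds01 f g u).
  have := int_le i; set I := RInt _ _ _ => le_I.
  have -> : / h * I = I / h by field; lra.
  have : I / h <= c by apply: (Rmult_le_reg_r h) => //; rewrite /Rdiv Rmult_assoc Rinv_l; lra.
  have : 0 <= I / h by apply: Rmult_le_pos => //; apply: Rlt_le; apply: Rinv_0_lt_compat.
  nra.
move=> lt_iN; rewrite RInt_eq0; first ring.
  by have := cell_length h i; lra.
by move=> u /(agree i u lt_iN) fg; rewrite /delta fg eqxx.
Qed.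

Lemma dDelta_le_agree (f g : R -> V) (N : nat) :
  (forall u, - INR N * h <= u <= INR N * h -> f u = g u) -> dDelta h f g <= 4 * (/2) ^ N.
Proof.
move=> agree; rewrite -[4]Rmult_1_r; apply: dDelta_le => [|i|i u lt_iN [lb ub]].
- lra.
- have := RInt_bounds01 (f := delta f g) (a := IZR i * h) (b := IZR (i + 1) * h).
  have := cell_length h i; move=> len /(_ _ (fun u _ => delta_bounds01 f g u)); lra.
- apply: agree; rewrite INR_IZR_INZ.
  have lb_i : (- Z.of_nat N <= i)%Z by lia.
  have ub_i : (i + 1 <= Z.of_nat N)%Z by lia.
  have := Rmult_le_compat_r h _ _ (Rlt_le _ _ hpos) (IZR_le _ _ lb_i).
  have := Rmult_le_compat_r h _ _ (Rlt_le _ _ hpos) (IZR_le _ _ ub_i).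
  rewrite opp_IZR; lra.
Qed.

(* The two functions read the same entry of [xs] unless [u + t] and [u + t + s] straddle a
   multiple of [h]; a cell of the metric meets at most two such pieces, each of length [s]. *)
Lemma dDelta_stepfun_shift (xs : Z -> V) (t s : R) :
  0 <= s <= h / 2 -> dDelta h (stepfun xs t) (stepfun xs (t + s)) <= 8 * s / h.
Proof.
move=> [s_ge0 s_le]; have -> : 8 * s / h = 4 * (2 * s / h) * (/2) ^ 0 by simpl; field; lra.
apply: dDelta_le => [|i|]; last by move=> i u /=; lia.
  by apply: Rmult_le_pos; [lra | apply: Rlt_le; apply: Rinv_0_lt_compat].
have -> : 2 * s / h * h = 2 * s by field; lra.
have same_cell u n : IZR n * h <= u + t -> u + t + s < IZR (n + 1) * h ->
    delta (stepfun xs t) (stepfun xs (t + s)) u = 0.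
  move=> lb ub; rewrite /delta /stepfun (@cell_unique h hpos n (u + t)); last lra.
  by rewrite (@cell_unique h hpos n (u + (t + s))) ?eqxx //; lra.
have := cell_spec hpos (IZR i * h + t); set k := cell h _ => -[lb ub].
have := cell_length h i; have := cell_length h k; have := cell_length h (k + 1).
move=> len_k1 len_k len_i.
apply: (@RInt_le_two_tails _ _ (IZR (k + 1) * h - t)) => [|||u|u] //.
- lra.
- by move=> u _; apply: delta_bounds01.
- by move=> [lb_u ub_u]; apply: (same_cell u k); lra.
- by move=> [lb_u ub_u]; apply: (same_cell u (k + 1)%Z); lra.
Qed.

Lemma stepfun_orbit_open (C : {set V}) (P : (R -> V) -> Prop) (xs : Z -> V) :
  in_Omega E xs -> (forall i, xs i \in C) ->
  rel_open (dDelta h) (Delta_C E h C) P -> open_set (fun t => P (stepfun xs t)).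
Proof.
move=> xs_path xs_C P_open t Pt.
have orbit_C r : Delta_C E h C (stepfun xs r) by apply/Delta_C_stepfunP; exists xs, r.
have [eps [eps_gt0 ball_eps]] := P_open _ (orbit_C t) Pt.
set e := Rmin (h / 2) (eps * h / 16).
have e_gt0 : 0 < e by apply: Rmin_pos; [lra | nra].
have close r s : 0 <= s < e -> dDelta h (stepfun xs r) (stepfun xs (r + s)) < eps.
  move=> [s_ge0 lt_se]; have := Rmin_l (h / 2) (eps * h / 16).
  have := Rmin_r (h / 2) (eps * h / 16); rewrite -/e => le_e_eps le_e_h.
  apply: Rle_lt_trans (dDelta_stepfun_shift xs r (conj s_ge0 _)) _; first lra.
  apply: (Rmult_lt_reg_r h) => //; rewrite /Rdiv Rmult_assoc Rinv_l; lra.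
exists (mkposreal e e_gt0) => r /Rabs_def2 /= [lt_r lt_t]; apply: ball_eps (orbit_C r) _.
have [le_tr|lt_rt] := Rle_or_lt t r.
  rewrite (_ : r = t + (r - t)); last ring.
  by apply: close; lra.
rewrite dDelta_sym (_ : t = r + (t - r)); last ring.
by apply: close; lra.
Qed.

Lemma rel_clopen_stepfun_const (C : {set V}) (P : (R -> V) -> Prop) (xs : Z -> V) (t t' : R) :
  rel_open (dDelta h) (Delta_C E h C) P ->
  rel_open (dDelta h) (Delta_C E h C) (fun f => ~ P f) ->
  in_Omega E xs -> (forall i, xs i \in C) -> P (stepfun xs t) -> P (stepfun xs t').
Proof.
move=> P_open nP_open xs_path xs_C.
exact: clopen_constant (stepfun_orbit_open xs_path xs_C P_open)
                       (stepfun_orbit_open xs_path xs_C nP_open).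
Qed.

Lemma stepfun_bridge (C : {set V}) (xs ys : Z -> V) (t1 t2 : R) (N : nat) :
  strongly_connected_set E C -> in_Omega E xs -> in_Omega E ys ->
  (forall i, xs i \in C) -> (forall i, ys i \in C) ->
  exists (z : Z -> V) (a b : R), in_Omega E z /\ (forall i, z i \in C) /\
    (forall u, - INR N * h <= u <= INR N * h -> stepfun z a u = stepfun xs t1 u) /\
    (forall u, - INR N * h <= u <= INR N * h -> stepfun z b u = stepfun ys t2 u).
Proof.
move=> C_conn xs_path ys_path xs_C ys_C.
(* Re-index so that the splice point 0 sits at the right end of the window for [xs] and
   at its left end for [ys]. *)
set K := cell h (INR N * h + t1); set J := cell h (- INR N * h + t2).
have [z [n [z_path [z_C [z_left z_right]]]]] := strongly_connected_splice C_conn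
  (in_Omega_shift K xs_path) (in_Omega_shift J ys_path)
  (fun i => xs_C (i + K)%Z) (fun i => ys_C (i + J)%Z).
exists z, (t1 + IZR (- K) * h), (t2 + IZR (n - J) * h); do 2 split=> //.
split=> u [lb ub]; rewrite /stepfun -Rplus_assoc cell_addZ //.
  have : (cell h (u + t1) <= K)%Z by apply: cell_le => //; lra.
  by move=> le_K; rewrite z_left; [congr xs; ring | lia].
have : (J <= cell h (u + t2))%Z by apply: cell_le => //; lra.
move=> le_J; rewrite (_ : (_ + (n - J) = cell h (u + t2) - J + n)%Z); last ring.
by rewrite z_right; [congr ys; ring | lia].
Qed.

End StepFunctions.

Theorem mainTheorem8 (V : finType) (E : rel V) (h : R) (hpos : (0 < h)%R)
  (C : {set V}) (hC : is_SCC E C) :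
  connected_in (dDelta h) (Delta_C E h C).
Proof.
move=> P P_open nP_open.
have [[f [Cf Pf]]|noP] := classic (exists f, Delta_C E h C f /\ P f); last first.
  by right=> f Cf Pf; apply: noP; exists f.
left=> g Cg; apply: NNPP => nPg.
have [e1 [e1_gt0 ball_f]] := P_open f Cf Pf.
have [e2 [e2_gt0 ball_g]] := nP_open g Cg nPg.
have [N N_small] := pow_half_lt (Rmin_pos _ _ e1_gt0 e2_gt0).
have := Rmin_l e1 e2; have := Rmin_r e1 e2 => le_e2 le_e1.
have /(Delta_C_stepfunP E hpos) [xs [t1 [xs_path [xs_C f_eq]]]] := Cf.
have /(Delta_C_stepfunP E hpos) [ys [t2 [ys_path [ys_C g_eq]]]] := Cg.
have [z [a [b [z_path [z_C [z_a z_b]]]]]] :=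
  stepfun_bridge hpos t1 t2 N hC.1 xs_path ys_path xs_C ys_C.
have Cz r : Delta_C E h C (stepfun h z r) by apply/(Delta_C_stepfunP E hpos); exists z, r.
have Pza : P (stepfun h z a).
  apply: ball_f (Cz a) _; rewrite f_eq dDelta_sym.
  by apply: Rle_lt_trans (dDelta_le_agree hpos z_a) _; lra.
apply: (ball_g _ (Cz b) _ (rel_clopen_stepfun_const hpos b P_open nP_open z_path z_C Pza)).
rewrite g_eq dDelta_sym.
by apply: Rle_lt_trans (dDelta_le_agree hpos z_b) _; lra.
Qed.
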